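(* Let $S,E\ge0$ be integers and let $\mathbf c=(c_1,\dots,c_m)$, $\mathbf d=(d_1,\dots,d_m)$ be partitions with $\mathbf c\ne\mathbf d$. Let $\ell=\max\{i: c_i\ne d_i\}$, $f=\max\{i\in\{1,\dots,\ell\}: c_i<d_{i-1}\}$ (with $d_0=+\infty$) and $f'=\max\{i\in\{1,\dots,\ell\}: d_i<c_{i-1}\}$ (with $c_0=+\infty$). 1. There exists a partition $\mathbf g=(g_1,\dots,g_{m+1})$ with $\sum_{i=1}^{m+1}g_i=S$, $\mathbf g\prec'\mathbf c$ and $\mathbf g\prec'\mathbf d$ if and only if $S\le\sum_{i=1}^m\min\{c_i,d_i\}+\max\{c_f,d_{f'}\}$. 2. If $f>1$ and $f'>1$, there exists a partition $\mathbf e=(e_1,\dots,e_{m-1})$ with $\sum_{i=1}^{m-1}e_i=E$, $\mathbf c\prec'\mathbf e$ and $\mathbf d\prec'\mathbf e$ if and only if $E\ge\sum_{i=1}^m\max\{c_i,d_i\}-\max\{c_f,d_{f'}\}$. 3. If $f=1$ or $f'=1$, there exists a partition $\mathbf e=(e_1,\dots,e_{m-1})$ with $\sum_{i=1}^{m-1}e_i=E$, $\mathbf c\prec'\mathbf e$ and $\mathbf d\prec'\mathbf e$ if and only if $$E=\sum_{i=1}^m\max\{c_i,d_i\}-\max\{c_f,d_{f'}\}\quad\text{or}\quad E\ge\sum_{i=1}^m\max\{c_i,d_i\}-\max\{c_{f+1},d_{f'+1}\};$$ equivalently, if and only if $E=\sum_{i=2}^m\max\{c_i,d_i\}$ or 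$E\ge\max\{c_1,d_1\}+\sum_{i=3}^m\max\{c_i,d_i\}$.
   Context: A partition is a nonincreasing finite sequence of nonnegative integers; for a sequence $(a_1,\dots,a_m)$ one sets $a_i=-\infty$ for $i>m$. 1-step generalized majorization: for nonincreasing integer sequences $\mathbf g=(g_1,\dots,g_{k+1})$ and $\mathbf a=(a_1,\dots,a_k)$, set $a_{k+1}=-\infty$ and $h=\min\{i: a_i<g_i\}$; then $\mathbf g\prec'\mathbf a$ means $a_i=g_{i+1}$ for all $h\le i\le k$. Empty sums are $0$. *)

From mathcomp Require Import all_boot.
Set Implicit Arguments.
Unset Strict Implicit.
Unset Printing Implicit Defensive.

Definition is_partition (s : seq nat) : Prop := sorted geq s.

(* 1-based access: [at_ s i] is s_i for 1 <= i <= size s. *)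
Definition at_ (s : seq nat) (i : nat) : nat := nth 0 s i.-1.

(* 1-based access with the convention s_i = -oo for i > size s
   (None stands for -oo); only used for i >= 1. *)
Definition xat (s : seq nat) (i : nat) : option nat :=
  if i.-1 < size s then Some (nth 0 s i.-1) else None.

Definition omaxn (x y : option nat) : option nat :=
  match x, y with
  | Some a, Some b => Some (maxn a b)
  | Some a, None => Some a
  | None, Some b => Some b
  | None, None => None
  end.

(* With 0-based indices: a_k = -oo, h = min{i : a_i < g_i} (= k if no
   i < k satisfies a_i < g_i), and we require a_i = g_{i+1} for h <= i < k. *)
Definition prec1 (g a : seq nat) : Prop :=
  size g = (size a).+1 /\
  let h := find (fun i => nth 0 a i < nth 0 g i) (iota 0 (size a)) in
  forall i, h <= i < size a -> nth 0 a i = nth 0 g i.+1.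

Definition ell (c d : seq nat) : nat :=
  \max_(i < size c | nth 0 c i != nth 0 d i) i.+1.

(* f = max{i in 1..l : c_i < d_{i-1}}, with d_0 = +oo *)
Definition fidx (c d : seq nat) : nat :=
  \max_(1 <= i < (ell c d).+1 | (i == 1) || (at_ c i < at_ d i.-1)) i.

From mathcomp Require Import all_boot zify.

(* Write g <' a with an explicit threshold h: g_i <= a_i for i < h and
   a_i = g_(i+1) from h on.  If a common predecessor g of c and d has
   thresholds h <= h', its tail is forced to be the pointwise minimum of c
   and d and its head lies below it, so sum g <= sum_i min(c_i, d_i) + g_h,
   and the choice of f and f' gives g_h <= max(c_f, d_f').  Inserting that
   maximum into the sequence of minima attains the bound; every smaller sum
   is reached by lowering g at a strict descent lying before both thresholds.
   Dually a common successor e satisfies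
   sum_i max(c_i, d_i) <= sum e + max(c_h, d_h) <= sum e + max(c_f, d_f'),
   deleting position f from the sequence of maxima attains the bound, and
   every larger sum is reached by raising e_1, which preserves both relations
   as long as neither threshold is the first position.  When f = 1 or f' = 1
   this raising is not available from the extremal e, and the two families of
   part 3 (delete position 1, or delete position 2 and raise) appear. *)

Set Implicit Arguments.
Unset Strict Implicit.

Definition nonincreasing (s : seq nat) :=
  forall i j, i <= j -> nth 0 s j <= nth 0 s i.

Lemma is_partitionP s : is_partition s <-> nonincreasing s.
Proof.
split=> [s_sorted i j le_ij | s_noninc]; last first.
  by apply/(sortedP 0) => i _; apply: s_noninc.
have [j_lt | j_ge] := ltnP j (size s); last by rewrite nth_default.
have geq_trans : transitive geq by move=> y x z le_yx le_zy; apply: leq_trans le_zy le_yx.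
have := sorted_leq_nth geq_trans (fun n => leqnn n) 0 s_sorted.
by apply; rewrite ?inE // (leq_ltn_trans le_ij).
Qed.

Lemma nonincreasing_succ s :
  (forall i, i.+1 < size s -> nth 0 s i.+1 <= nth 0 s i) -> nonincreasing s.
Proof. by move=> s_succ; apply/is_partitionP/(sortedP 0). Qed.

Lemma nonincreasing_mkseq F n : (forall i j, i <= j -> F j <= F i) ->
  nonincreasing (mkseq F n).
Proof.
move=> F_noninc; apply: nonincreasing_succ => i; rewrite size_mkseq => lt_in.
by rewrite !nth_mkseq ?F_noninc // ltnW.
Qed.

Lemma nth_mkseq0 F n i : (forall j, n <= j -> F j = 0) -> nth 0 (mkseq F n) i = F i.
Proof.
move=> F_eq0; have [lt_in | ge_in] := ltnP i n; first by rewrite nth_mkseq.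
by rewrite nth_default ?size_mkseq ?F_eq0.
Qed.

Lemma sumn_nth s : sumn s = \sum_(0 <= i < size s) nth 0 s i.
Proof. by rewrite sumnE (big_nth 0). Qed.

Lemma sumn_mkseq F n : sumn (mkseq F n) = \sum_(0 <= i < n) F i.
Proof.
by rewrite sumn_nth size_mkseq; apply: eq_big_nat => i /andP[_ lt_in]; rewrite nth_mkseq.
Qed.

Lemma leq_sum_nat a b F G : (forall i, a <= i < b -> F i <= G i) ->
  \sum_(a <= i < b) F i <= \sum_(a <= i < b) G i.
Proof.
move=> le_FG; rewrite big_nat_cond [leqRHS]big_nat_cond.
by apply: leq_sum => i /andP[i_ab _]; apply: le_FG.
Qed.

Lemma big_nat_split_at n h F : h <= n ->
  \sum_(0 <= i < n.+1) F i = \sum_(0 <= i < h) F i + F h + \sum_(h <= i < n) F i.+1.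
Proof.
move=> le_hn; rewrite (@big_cat_nat _ _ _ h) //=; last exact: leqW.
by rewrite [\sum_(h <= i < n.+1) _]big_ltn ?ltnS // big_add1 /= addnA.
Qed.

Definition insert_at h x (s : seq nat) := take h s ++ x :: drop h s.

Definition delete_at h (s : seq nat) := take h s ++ drop h.+1 s.

Section InsertDelete.

Variables (s : seq nat) (h : nat).

Lemma size_insert_at x : h <= size s -> size (insert_at h x s) = (size s).+1.
Proof. by move=> le_hs; rewrite size_cat /= size_take_min size_drop; lia. Qed.

Lemma nth_insert_at x i : h <= size s ->
  nth 0 (insert_at h x s) i =
    if i < h then nth 0 s i else if i == h then x else nth 0 s i.-1.
Proof.
move=> le_hs; have size_take_h : size (take h s) = h by rewrite size_take_min; lia.
rewrite nth_cat size_take_h; case: ltnP => [lt_ih | ge_ih]; first by rewrite nth_take.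
case: eqP => [-> | /eqP ne_ih]; first by rewrite subnn.
have -> : i - h = (i.-1 - h).+1 by lia.
by rewrite /= nth_drop; congr nth; lia.
Qed.

Lemma sumn_insert_at x : sumn (insert_at h x s) = x + sumn s.
Proof. by rewrite sumn_cat /= addnCA -sumn_cat cat_take_drop. Qed.

Lemma size_delete_at : h < size s -> size (delete_at h s) = (size s).-1.
Proof. by move=> lt_hs; rewrite size_cat size_take_min size_drop; lia. Qed.

Lemma nth_delete_at i :
  nth 0 (delete_at h s) i = if i < h then nth 0 s i else nth 0 s i.+1.
Proof.
rewrite nth_cat size_take; case: (ltnP h (size s)) => [lt_hs|ge_hs].
- case: ltnP => [lt_ih|ge_ih]; first by rewrite nth_take.
  by rewrite nth_drop; congr nth; lia.
- case: ltnP => [lt_is|ge_is].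
    by rewrite nth_take ?ifT //; lia.
  by rewrite drop_oversize ?nth_nil ?nth_default ?if_same //; lia.
Qed.

Lemma sumn_delete_at : h < size s -> sumn (delete_at h s) + nth 0 s h = sumn s.
Proof.
move=> lt_hs; rewrite -[in RHS](cat_take_drop h s) (drop_nth 0 lt_hs).
by rewrite !sumn_cat /=; lia.
Qed.

End InsertDelete.

Lemma nonincreasing_insert_at s h x : nonincreasing s -> h <= size s ->
  nth 0 s h <= x -> (0 < h -> x <= nth 0 s h.-1) -> nonincreasing (insert_at h x s).
Proof.
move=> s_noninc le_hs le_sx le_xs; apply: nonincreasing_succ => i _.
rewrite !nth_insert_at //; have := s_noninc i i.+1 (leqnSn i).
case: (ltngtP i.+1 h) => [// | lt_hi | eq_ih] _.
  by case: eqP => [-> // | _]; apply: s_noninc; apply: leq_pred.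
by move: le_xs; rewrite -eq_ih; apply.
Qed.

Lemma nonincreasing_delete_at s h : nonincreasing s -> nonincreasing (delete_at h s).
Proof.
move=> s_noninc i j le_ij; rewrite !nth_delete_at.
by case: ltnP => lt_jh; case: ltnP => lt_ih; apply: s_noninc; lia.
Qed.

(* [prec1 g a] with its threshold made explicit; unlike the [h] of [prec1],
   this one need not be the least possible. *)
Definition prec1_at (g a : seq nat) (h : nat) :=
  [/\ h <= size a, forall i, i < h -> nth 0 g i <= nth 0 a i
    & forall i, h <= i < size a -> nth 0 a i = nth 0 g i.+1].

Lemma prec1_strict_cut g a : prec1 g a ->
  exists h, prec1_at g a h /\ (h < size a -> nth 0 a h < nth 0 g h).
Proof.
case=> _ /=; set P := fun i => _ < _; set h := find P _ => a_tail.
have le_ha : h <= size a by rewrite -[leqRHS](size_iota 0) find_size.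
exists h; split.
  split=> [// | i lt_ih | //]; have := before_find 0 lt_ih.
  rewrite nth_iota ?add0n; last exact: leq_trans lt_ih le_ha.
  by rewrite /P ltnNge => /negbFE.
move=> lt_ha; have has_P : has P (iota 0 (size a)) by rewrite has_find size_iota.
by have := nth_find 0 has_P; rewrite nth_iota.
Qed.

Lemma prec1P g a : prec1 g a <-> size g = (size a).+1 /\ exists h, prec1_at g a h.
Proof.
split=> [g_a | [g_size [h [le_ha g_head a_tail]]]].
  by have [h [g_ah _]] := prec1_strict_cut g_a; split; [case: g_a | exists h].
split=> //=; set P := fun i => _ < _; set h0 := find P _.
suff le_hh0 : h <= h0.
  by move=> i /andP[le_h0i lt_ia]; rewrite a_tail // lt_ia (leq_trans le_hh0).
rewrite leqNgt; apply/negP => lt_h0h.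
have has_P : has P (iota 0 (size a)) by rewrite has_find size_iota (leq_trans lt_h0h).
have := nth_find 0 has_P; rewrite -/h0 nth_iota ?add0n; last exact: leq_trans lt_h0h le_ha.
by rewrite /P ltnNge g_head.
Qed.

Lemma prec1_at_prec1 g a h : size g = (size a).+1 -> prec1_at g a h -> prec1 g a.
Proof. by move=> size_g g_a; apply/prec1P; split; last exists h. Qed.

Definition minnth (c d : seq nat) i := minn (nth 0 c i) (nth 0 d i).
Definition maxnth (c d : seq nat) i := maxn (nth 0 c i) (nth 0 d i).

Lemma minnthC c d i : minnth c d i = minnth d c i.
Proof. exact: minnC. Qed.

Lemma maxnthC c d i : maxnth c d i = maxnth d c i.
Proof. exact: maxnC. Qed.

Lemma sum_minnthC c d a b :
  \sum_(a <= i < b) minnth c d i = \sum_(a <= i < b) minnth d c i.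
Proof. by apply: eq_bigr => i _; apply: minnthC. Qed.

Lemma sum_maxnthC c d a b :
  \sum_(a <= i < b) maxnth c d i = \sum_(a <= i < b) maxnth d c i.
Proof. by apply: eq_bigr => i _; apply: maxnthC. Qed.

Section CommonPred.

Variables (c d g : seq nat) (m h h' : nat).
Hypotheses (size_c : size c = m) (size_d : size d = m).
Hypotheses (g_c : prec1_at g c h) (g_d : prec1_at g d h') (le_hh' : h <= h').

Lemma common_pred_tail_eq i : h' <= i -> nth 0 c i = nth 0 d i.
Proof.
case: g_c g_d => _ _ c_tail [_ _ d_tail] le_h'i.
have [lt_im | ge_im] := ltnP i m; last by rewrite !nth_default ?size_c ?size_d.
by rewrite c_tail ?d_tail ?size_c ?size_d ?lt_im ?andbT ?(leq_trans le_hh' le_h'i).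
Qed.

Hypothesis g_noninc : nonincreasing g.

Lemma common_pred_tail_le i : h <= i -> nth 0 c i <= nth 0 d i.
Proof.
move=> le_hi; have [le_h'i | lt_ih'] := leqP h' i; first by rewrite common_pred_tail_eq.
case: g_c g_d => _ _ c_tail [le_h'd d_head _].
rewrite c_tail ?le_hi ?size_c -?size_d ?(leq_trans lt_ih' le_h'd) //.
exact: leq_trans (g_noninc (leqnSn i)) (d_head _ lt_ih').
Qed.

Lemma common_pred_sum_le : size g = m.+1 ->
  sumn g <= \sum_(0 <= i < m) minnth c d i + nth 0 g h.
Proof.
move=> size_g; have [le_hm g_c_head c_tail] := g_c; rewrite size_c in le_hm c_tail.
have [_ g_d_head _] := g_d.
rewrite sumn_nth size_g (big_nat_split_at _ le_hm) (big_cat_nat (leq0n h) le_hm) /=.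
have -> : \sum_(h <= i < m) nth 0 g i.+1 = \sum_(h <= i < m) minnth c d i.
  apply: eq_big_nat => i /andP[le_hi lt_im]; rewrite -c_tail ?le_hi //.
  by apply/esym/minn_idPl/common_pred_tail_le.
have : \sum_(0 <= i < h) nth 0 g i <= \sum_(0 <= i < h) minnth c d i.
  apply: leq_sum_nat => i /andP[_ lt_ih].
  by rewrite leq_min g_c_head // g_d_head // (leq_trans lt_ih).
lia.
Qed.

End CommonPred.

Lemma exists_descent s n : nth 0 s n < nth 0 s 0 ->
  exists2 j, j < n & nth 0 s j.+1 < nth 0 s j.
Proof.
elim: n => [|n IHn] lt_n0; first by rewrite ltnn in lt_n0.
have [lt_n0' | ge_n0] := ltnP (nth 0 s n) (nth 0 s 0).
  by have [j lt_jn desc_j] := IHn lt_n0'; exists j => //; apply: leqW.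
by exists n => //; apply: leq_trans lt_n0 ge_n0.
Qed.

Lemma nonincreasing_head_gt0 s : nonincreasing s -> 0 < sumn s -> 0 < nth 0 s 0.
Proof.
move=> s_noninc; rewrite !lt0n; apply: contra => /eqP s0_eq0.
rewrite sumn_nth big_nat_cond big1 // => i _.
by have := s_noninc 0 i isT; rewrite s0_eq0 leqn0 => /eqP.
Qed.

Lemma strict_cut_descent g a h : nonincreasing g -> size g = (size a).+1 ->
  0 < sumn g -> prec1_at g a h -> (h < size a -> nth 0 a h < nth 0 g h) ->
  exists2 j, j <= h & nth 0 g j.+1 < nth 0 g j.
Proof.
move=> g_noninc size_g sum_gt0 [le_ha _ a_tail] a_strict.
have [lt_ha | ge_ha] := ltnP h (size a).
  by exists h => //; rewrite -a_tail ?leqnn ?a_strict.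
have [j lt_jh desc_j] : exists2 j, j < h.+1 & nth 0 g j.+1 < nth 0 g j.
  by apply: exists_descent; rewrite nth_default ?nonincreasing_head_gt0 // size_g; lia.
by exists j.
Qed.

Lemma nonincreasing_set_pred s j : nonincreasing s -> nth 0 s j.+1 < nth 0 s j ->
  nonincreasing (set_nth 0 s j (nth 0 s j).-1).
Proof.
move=> s_noninc desc_j; apply: nonincreasing_succ => i _; rewrite !nth_set_nth /=.
have := s_noninc i i.+1 (leqnSn i).
case: (eqVneq i j) => [-> | _]; first by rewrite gtn_eqF //; lia.
by case: eqP => [<- | _]; lia.
Qed.

Lemma prec1_at_set_pred g a h j : j <= h -> prec1_at g a h ->
  prec1_at (set_nth 0 g j (nth 0 g j).-1) a h.
Proof.
move=> le_jh [le_ha g_head a_tail]; split=> // i => [lt_ih | /andP[le_hi lt_ia]].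
  rewrite nth_set_nth /=; case: eqP => [<- | _]; last exact: g_head.
  exact: leq_trans (leq_pred _) (g_head _ lt_ih).
by rewrite nth_set_nth /= gtn_eqF ?a_tail ?le_hi // ltnS (leq_trans le_jh).
Qed.

Lemma common_pred_decr c d g : size c = size d -> nonincreasing g ->
  size g = (size c).+1 -> prec1 g c -> prec1 g d -> 0 < sumn g ->
  exists g', [/\ nonincreasing g', size g' = size g, sumn g' + 1 = sumn g,
                 prec1 g' c & prec1 g' d].
Proof.
move=> size_cd g_noninc size_g g_c g_d sum_gt0.
have [h [g_ch c_strict]] := prec1_strict_cut g_c.
have [h' [g_dh' d_strict]] := prec1_strict_cut g_d.
have [j le_jh desc_j] := strict_cut_descent g_noninc size_g sum_gt0 g_ch c_strict.
have [j' le_j'h' desc_j'] :=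
  strict_cut_descent g_noninc (etrans size_g (congr1 S size_cd)) sum_gt0 g_dh' d_strict.
have [k [le_kh le_kh' desc_k]] : exists k, [/\ k <= h, k <= h' & nth 0 g k.+1 < nth 0 g k].
  by case: (leqP h h') => [le_hh' | lt_h'h]; [exists j | exists j']; split=> //; lia.
have lt_kg : k < size g by case: g_ch => le_hc _ _; rewrite size_g ltnS (leq_trans le_kh).
exists (set_nth 0 g k (nth 0 g k).-1); split.
- exact: nonincreasing_set_pred.
- by rewrite size_set_nth; apply/maxn_idPr.
- by rewrite sumn_set_nth0; lia.
- apply: prec1_at_prec1 (prec1_at_set_pred le_kh g_ch).
  by rewrite size_set_nth (maxn_idPr lt_kg); case: g_c.
- apply: prec1_at_prec1 (prec1_at_set_pred le_kh' g_dh').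
  by rewrite size_set_nth (maxn_idPr lt_kg); case: g_d.
Qed.

Lemma common_pred_down c d g S : size c = size d -> nonincreasing g ->
  size g = (size c).+1 -> prec1 g c -> prec1 g d -> S <= sumn g ->
  exists g', [/\ is_partition g', size g' = size g, sumn g' = S,
                 prec1 g' c & prec1 g' d].
Proof.
move=> size_cd g_noninc size_g g_c g_d le_Sg.
have [k sum_g] : exists k, sumn g = S + k by exists (sumn g - S); lia.
elim: k g g_noninc size_g g_c g_d sum_g {le_Sg} => [|k IHk] g g_noninc size_g g_c g_d sum_g.
  by exists g; split=> //; [apply/is_partitionP | lia].
have [g' [g'_noninc size_g' sum_g' g'_c g'_d]] :=
  common_pred_decr size_cd g_noninc size_g g_c g_d ltac:(lia).
have [g'' [? size_g'' ? ? ?]] := IHk g' g'_noninc (etrans size_g' size_g) g'_c g'_d ltac:(lia).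
by exists g''; split=> //; rewrite size_g'' size_g'.
Qed.

(* 0-based form of f = max{i <= l : c_i < d_(i-1)} (d_0 = +oo): p = f - 1. *)
Definition drop_index (c d : seq nat) (l p : nat) :=
  [/\ p < l, p = 0 \/ nth 0 c p < nth 0 d p.-1
    & forall k, p < k < l -> nth 0 d k.-1 <= nth 0 c k].

(* Here l is the paper's (1-based) last differing index, p = f - 1, p' = f' - 1. *)
Record layout (c d : seq nat) (m l p p' : nat) : Prop := Layout {
  noninc_c : nonincreasing c;
  noninc_d : nonincreasing d;
  size_c : size c = m;
  size_d : size d = m;
  last_gt0 : 0 < l;
  last_le : l <= m;
  neq_last : nth 0 c l.-1 != nth 0 d l.-1;
  eq_from_last : forall i, l <= i -> nth 0 c i = nth 0 d i;
  drop_c : drop_index c d l p;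
  drop_d : drop_index d c l p'
}.

Section Layout.

Variables (c d : seq nat) (m l p p' : nat).
Hypothesis H : layout c d m l p p'.

Lemma layout_sym : layout d c m l p' p.
Proof.
case: H => ? ? ? ? ? ? neq_cd eq_cd ? ?; split=> //; first by rewrite eq_sym.
by move=> i /eq_cd.
Qed.

Lemma layout_ge_after j : p < j -> nth 0 d j <= nth 0 c j.
Proof.
move=> lt_pj; have [le_lj | lt_jl] := leqP l j; first by rewrite (eq_from_last H).
have [_ _ c_after] := drop_c H.
by apply: leq_trans (noninc_d H (leq_pred j)) (c_after _ _); rewrite lt_pj.
Qed.

Lemma layout_last_lt : nth 0 c l.-1 < nth 0 d l.-1 -> p = l.-1.
Proof.
move=> lt_last; have [lt_pl _ c_after] := drop_c H; have l_gt0 := last_gt0 H.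
have [lt_p | ge_p] := ltnP p l.-1; last by lia.
have := c_after l.-1; have := noninc_d H (leq_pred l.-1); lia.
Qed.

End Layout.

Lemma layout_max_last c d m l p p' : layout c d m l p p' ->
  maxnth c d l.-1 <= maxn (nth 0 c p) (nth 0 d p').
Proof.
move=> H; have [lt_pl _ _] := drop_c H; have [lt_p'l _ _] := drop_d H.
have /(noninc_c H) le_cp : p <= l.-1 by lia.
have /(noninc_d H) le_dp' : p' <= l.-1 by lia.
rewrite /maxnth; case: (ltngtP (nth 0 c l.-1) (nth 0 d l.-1)) => [lt_cd | lt_dc | eq_cd].
- by have := layout_last_lt H lt_cd; lia.
- by have := layout_last_lt (layout_sym H) lt_dc; lia.
- by have := neq_last H; rewrite eq_cd eqxx.
Qed.

Lemma layout_le_from c d m l p p' : layout c d m l p p' ->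
  nth 0 c p <= nth 0 d p' -> forall i, p' <= i -> nth 0 c i <= nth 0 d i.
Proof.
move=> H le_cp_dp' i; rewrite leq_eqVlt => /orP[/eqP <- | lt_p'i].
  have [lt_p'l _ d_after] := drop_d H; have [lt_pl _ _] := drop_c H.
  have [lt_p'1l | ge_p'1l] := ltnP p'.+1 l.
    by apply: leq_trans (d_after p'.+1 _) (noninc_d H (leqnSn p')); rewrite ltnSn.
  have /(noninc_c H) le_cp'_cp : p <= p' by lia.
  exact: leq_trans le_cp'_cp le_cp_dp'.
exact: (layout_ge_after (layout_sym H) lt_p'i).
Qed.

Lemma common_pred_pivot_le c d m l p p' g h h' : layout c d m l p p' ->
  nonincreasing g -> prec1_at g c h -> prec1_at g d h' -> h <= h' ->
  nth 0 g h <= maxn (nth 0 c p) (nth 0 d p').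
Proof.
move=> H g_noninc g_c g_d le_hh'.
have le_lh' : l <= h'.
  rewrite leqNgt; apply/negP => lt_h'l; move: (neq_last H).
  by rewrite (common_pred_tail_eq (size_c H) (size_d H) g_c g_d le_hh') ?eqxx //; lia.
have [_ g_c_head c_tail] := g_c; have [_ g_d_head _] := g_d.
have l_gt0 := last_gt0 H; have le_lm := last_le H; have size_cm := size_c H.
move: le_hh'; rewrite leq_eqVlt => /orP[/eqP eq_hh' | lt_hh'].
  have /g_noninc le_gh := leq_pred h; have /g_c_head le_gc : h.-1 < h by lia.
  have /(noninc_c H) le_c : l.-1 <= h.-1 by lia.
  by have := layout_max_last H; rewrite /maxnth; lia.
have le_p'h : p' <= h.
  rewrite leqNgt; apply/negP => lt_hp'.
  have [lt_p'l [p'_eq0 | d_drop] _] := drop_d H; first by lia.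
  have eq_cg : nth 0 c p'.-1 = nth 0 g p' by rewrite c_tail ?prednK //; lia.
  by have := g_d_head p' ltac:(lia); lia.
by have /(noninc_d H) := le_p'h; have := g_d_head h lt_hh'; lia.
Qed.

Lemma layout_common_pred_sum_le c d m l p p' g h h' : layout c d m l p p' ->
  nonincreasing g -> size g = m.+1 -> prec1_at g c h -> prec1_at g d h' -> h <= h' ->
  sumn g <= \sum_(0 <= i < m) minnth c d i + maxn (nth 0 c p) (nth 0 d p').
Proof.
move=> H g_noninc size_g g_c g_d le_hh'.
apply: leq_trans (common_pred_sum_le (size_c H) (size_d H) g_c g_d le_hh' g_noninc size_g) _.
by rewrite leq_add2l (common_pred_pivot_le H g_noninc g_c g_d le_hh').
Qed.

Definition common_pred_insert (c d : seq nat) m h :=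
  insert_at h (nth 0 d h) (mkseq (minnth c d) m).

Lemma common_pred_insert_spec c d m l p p' : layout c d m l p p' ->
  nth 0 c p <= nth 0 d p' -> let g := common_pred_insert c d m p' in
  [/\ nonincreasing g, size g = m.+1,
      sumn g = nth 0 d p' + \sum_(0 <= i < m) minnth c d i,
      prec1_at g c p' & prec1_at g d l].
Proof.
move=> H le_cd; rewrite /common_pred_insert; set s := mkseq _ m; set g := insert_at _ _ s.
have [lt_p'l d_drop c_after] := drop_d H.
have le_lm := last_le H; have size_cm := size_c H; have size_dm := size_d H.
have nth_s i : nth 0 s i = minnth c d i.
  by apply: nth_mkseq0 => j le_mj; rewrite /minnth !nth_default ?size_cm ?size_dm.
have le_p's : p' <= size s by rewrite size_mkseq; lia.
have min_c i : p' <= i -> minnth c d i = nth 0 c i.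
  by move=> /(layout_le_from H le_cd) /minn_idPl.
have nth_g i : nth 0 g i =
    if i < p' then minnth c d i else if i == p' then nth 0 d p' else nth 0 c i.-1.
  rewrite nth_insert_at // !nth_s; case: ltnP => // le_p'i; case: eqP => // ne_ip'.
  by rewrite min_c //; lia.
split.
- apply: nonincreasing_insert_at => //; rewrite ?nth_s /minnth ?geq_minr //.
    apply: nonincreasing_mkseq => i j le_ij; rewrite /minnth.
    by have := noninc_c H le_ij; have := noninc_d H le_ij; lia.
  move=> p'_gt0; have := noninc_d H (leq_pred p'); case: d_drop; lia.
- by rewrite /g size_insert_at // /s size_mkseq.
- by rewrite /g sumn_insert_at /s sumn_mkseq.
- split=> [| i lt_ip' | i /andP[le_p'i lt_im]].
  + by rewrite size_cm; lia.
  + by rewrite nth_g lt_ip' geq_minl.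
  + by rewrite nth_g ltnNge ltnW // gtn_eqF.
- split=> [| i lt_il | i /andP[le_li lt_im]].
  + by rewrite size_dm.
  + rewrite nth_g; case: (ltngtP i p') => [_ | lt_p'i | ->]; rewrite ?geq_minr //.
    by apply: c_after; lia.
  + by rewrite nth_g ltnNge ltnW ?gtn_eqF /= ?(eq_from_last H) //; lia.
Qed.

Lemma layout_common_pred_max c d m l p p' : layout c d m l p p' ->
  exists g, [/\ nonincreasing g, size g = m.+1,
    sumn g = \sum_(0 <= i < m) minnth c d i + maxn (nth 0 c p) (nth 0 d p'),
    prec1 g c & prec1 g d].
Proof.
wlog le_cd : c d p p' / nth 0 c p <= nth 0 d p'.
  move=> main H; case/orP: (leq_total (nth 0 c p) (nth 0 d p')) => [le_cd | le_dc].
    exact: main le_cd H.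
  have [g [g_noninc size_g sum_g g_c g_d]] := main d c p' p le_dc (layout_sym H).
  by exists g; split=> //; rewrite sum_g maxnC (sum_minnthC d c).
move=> H; have [g_noninc size_g sum_g g_c g_d] := common_pred_insert_spec H le_cd.
exists (common_pred_insert c d m p'); split=> //.
- by rewrite sum_g (maxn_idPr le_cd) addnC.
- by apply: prec1_at_prec1 g_c; rewrite size_g (size_c H).
- by apply: prec1_at_prec1 g_d; rewrite size_g (size_d H).
Qed.

Lemma exists_common_pred_iff c d m l p p' S : layout c d m l p p' ->
  (exists g, [/\ is_partition g, size g = m.+1, sumn g = S, prec1 g c & prec1 g d]) <->
  S <= \sum_(0 <= i < m) minnth c d i + maxn (nth 0 c p) (nth 0 d p').
Proof.
move=> H; split=> [[g [/is_partitionP g_noninc size_g <- g_c g_d]] | le_S].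
  move: g_c g_d => /prec1P[_ [h g_ch]] /prec1P[_ [h' g_dh']].
  have [le_hh' | /ltnW le_h'h] := leqP h h'.
    exact: layout_common_pred_sum_le H g_noninc size_g g_ch g_dh' le_hh'.
  rewrite maxnC (sum_minnthC c d).
  exact: layout_common_pred_sum_le (layout_sym H) g_noninc size_g g_dh' g_ch le_h'h.
have [g [g_noninc size_g sum_g g_c g_d]] := layout_common_pred_max H.
have size_cd : size c = size d by rewrite (size_c H) (size_d H).
have size_gc : size g = (size c).+1 by rewrite size_g (size_c H).
have le_Sg : S <= sumn g by rewrite sum_g.
have [g' [? size_g' ? ? ?]] := common_pred_down size_cd g_noninc size_gc g_c g_d le_Sg.
by exists g'; rewrite size_g' size_g.
Qed.

Section CommonSucc.

Variables (c d e : seq nat) (m h h' : nat).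
Hypotheses (size_c : size c = m) (size_d : size d = m) (size_e : size e = m.-1).
Hypotheses (c_e : prec1_at c e h) (d_e : prec1_at d e h') (le_hh' : h <= h').

Lemma common_succ_tail_eq j : h' < j -> nth 0 c j = nth 0 d j.
Proof.
case: c_e d_e => _ _ c_tail [_ _ d_tail] lt_h'j.
have [lt_jm | ge_jm] := ltnP j m; last by rewrite !nth_default ?size_c ?size_d.
have j_tail : h <= j.-1 < size e /\ h' <= j.-1 < size e by rewrite size_e; lia.
have j_gt0 : 0 < j by lia.
by case: j_tail => /c_tail c_j /d_tail d_j; rewrite -(prednK j_gt0) -c_j d_j.
Qed.

Hypothesis d_noninc : nonincreasing d.

Lemma common_succ_tail_ge j : h < j -> nth 0 d j <= nth 0 c j.
Proof.
move=> lt_hj; have [lt_h'j | le_jh'] := ltnP h' j; first by rewrite common_succ_tail_eq.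
case: c_e d_e => _ _ c_tail [le_h'e d_head _].
have j_gt0 : 0 < j by lia.
rewrite -(prednK j_gt0) -c_tail; last by apply/andP; split; lia.
apply: leq_trans (d_noninc (leqnSn _)) (d_head _ _); lia.
Qed.

Lemma common_succ_tail i : h <= i < size e -> nth 0 e i = maxnth c d i.+1.
Proof.
case: c_e => _ _ c_tail /andP[le_hi lt_ie].
by rewrite c_tail ?le_hi //; apply/esym/maxn_idPl/common_succ_tail_ge.
Qed.

Lemma common_succ_sum_ge :
  \sum_(0 <= i < m) maxnth c d i <= sumn e + maxnth c d h.
Proof.
have [le_he c_head _] := c_e; have [_ d_head _] := d_e.
have [m_eq0 | m_gt0] := posnP m; first by rewrite m_eq0 big_geq.
rewrite -(prednK m_gt0) (big_nat_split_at _ (_ : h <= m.-1)) -?size_e //.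
rewrite sumn_nth (big_cat_nat (leq0n h) le_he) /=.
have -> : \sum_(h <= i < size e) nth 0 e i = \sum_(h <= i < size e) maxnth c d i.+1.
  by apply: eq_big_nat => i i_tail; rewrite common_succ_tail.
have : \sum_(0 <= i < h) maxnth c d i <= \sum_(0 <= i < h) nth 0 e i.
  apply: leq_sum_nat => i /andP[_ lt_ih].
  by rewrite geq_max c_head // d_head // (leq_trans lt_ih).
lia.
Qed.

End CommonSucc.

Lemma common_succ_pivot_le c d m l p p' e h h' : layout c d m l p p' ->
  size e = m.-1 -> prec1_at c e h -> prec1_at d e h' -> h <= h' ->
  maxnth c d h <= maxn (nth 0 c p) (nth 0 d p').
Proof.
move=> H size_e c_e d_e le_hh'.
have l_gt0 := last_gt0 H; have le_lm := last_le H.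
have le_lh' : l <= h'.+1.
  rewrite leqNgt; apply/negP => lt_h'l; move: (neq_last H).
  by rewrite (common_succ_tail_eq (size_c H) (size_d H) size_e c_e d_e le_hh') ?eqxx //; lia.
have [_ c_head c_tail] := c_e; have [le_h'e d_head _] := d_e; rewrite size_e in c_tail le_h'e.
move: le_hh'; rewrite leq_eqVlt => /orP[/eqP eq_hh' | lt_hh'].
  have /(noninc_c H) le_c : l.-1 <= h by lia.
  have /(noninc_d H) le_d : l.-1 <= h by lia.
  by have := layout_max_last H; rewrite /maxnth; lia.
have le_ph : p <= h.
  rewrite leqNgt; apply/negP => lt_hp.
  have [lt_pl [p_eq0 | c_drop] _] := drop_c H; first by lia.
  have eq_ce : nth 0 c p = nth 0 e p.-1 by rewrite c_tail ?prednK //; lia.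
  by have := d_head p.-1 ltac:(lia); lia.
have /(noninc_c H) le_ch := le_ph; have le_c_succ := noninc_c H (leqnSn h).
by have := d_head h lt_hh'; rewrite c_tail /maxnth; lia.
Qed.

Lemma layout_common_succ_sum_ge c d m l p p' e h h' : layout c d m l p p' ->
  size e = m.-1 -> prec1_at c e h -> prec1_at d e h' -> h <= h' ->
  \sum_(0 <= i < m) maxnth c d i <= sumn e + maxn (nth 0 c p) (nth 0 d p').
Proof.
move=> H size_e c_e d_e le_hh'.
apply: leq_trans
  (common_succ_sum_ge (size_c H) (size_d H) size_e c_e d_e le_hh' (noninc_d H)) _.
by rewrite leq_add2l (common_succ_pivot_le H size_e c_e d_e le_hh').
Qed.

Definition common_succ_delete (c d : seq nat) m h :=
  delete_at h (mkseq (maxnth c d) m).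

Lemma common_succ_delete_spec c d m l p p' h : layout c d m l p p' -> p <= h < m ->
  let e := common_succ_delete c d m h in
  [/\ nonincreasing e, size e = m.-1,
      sumn e + maxnth c d h = \sum_(0 <= i < m) maxnth c d i,
      prec1_at c e h & prec1_at d e (maxn l.-1 h)].
Proof.
move=> H /andP[le_ph lt_hm]; rewrite /common_succ_delete.
set s := mkseq _ m; set e := delete_at h s.
have [lt_pl _ c_after] := drop_c H; have le_lm := last_le H.
have nth_s i : nth 0 s i = maxnth c d i.
  by apply: nth_mkseq0 => j le_mj; rewrite /maxnth !nth_default ?(size_c H) ?(size_d H).
have lt_hs : h < size s by rewrite size_mkseq.
have max_c i : p < i -> maxnth c d i = nth 0 c i by move=> /(layout_ge_after H) /maxn_idPl.
have nth_e i : nth 0 e i = if i < h then maxnth c d i else nth 0 c i.+1.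
  by rewrite nth_delete_at !nth_s; case: ltnP => // le_hi; rewrite max_c //; lia.
have size_e : size e = m.-1 by rewrite size_delete_at // size_mkseq.
split=> //.
- apply/nonincreasing_delete_at/nonincreasing_mkseq => i j le_ij; rewrite /maxnth.
  by have := noninc_c H le_ij; have := noninc_d H le_ij; lia.
- by rewrite -nth_s sumn_delete_at // sumn_mkseq.
- split=> [| i lt_ih | i /andP[le_hi lt_ie]]; rewrite ?size_e ?nth_e.
  + by lia.
  + by rewrite lt_ih leq_maxl.
  + by rewrite ltnNge le_hi.
- split=> [| i lt_il | i /andP[le_li lt_ie]]; rewrite ?size_e ?nth_e.
  + by lia.
  + by case: ltnP => [_ | le_hi]; [rewrite leq_maxr | apply: c_after; lia].
  + by rewrite ltnNge (leq_trans (leq_maxr _ _) le_li) (eq_from_last H) //; lia.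
Qed.

Lemma nonincreasing_raise_head s k : nonincreasing s ->
  nonincreasing (set_nth 0 s 0 (nth 0 s 0 + k)).
Proof.
move=> s_noninc i j le_ij; rewrite !nth_set_nth /=.
have := s_noninc i j le_ij; have := s_noninc 0 j (leq0n j).
by case: eqP => [j0 | nj0]; case: eqP => [i0 | ni0]; subst; lia.
Qed.

Lemma prec1_at_raise_head g a h k : 0 < h -> prec1_at g a h ->
  prec1_at g (set_nth 0 a 0 (nth 0 a 0 + k)) h.
Proof.
move=> h_gt0 [le_ha g_head a_tail].
have size_a' : size (set_nth 0 a 0 (nth 0 a 0 + k)) = size a.
  by rewrite size_set_nth; apply/maxn_idPr; lia.
split=> [| i lt_ih | i]; rewrite ?size_a' // nth_set_nth /=.
  by case: eqP => [-> | _]; [have := g_head 0 h_gt0; lia | apply: g_head].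
by move=> /andP[le_hi lt_ia]; rewrite ifN_eq ?a_tail ?le_hi //; lia.
Qed.

Lemma common_succ_up c d e h h' E :
  size c = (size e).+1 -> size d = (size e).+1 -> nonincreasing e ->
  prec1_at c e h -> prec1_at d e h' -> 0 < h -> 0 < h' -> sumn e <= E ->
  exists e', [/\ is_partition e', size e' = size e, sumn e' = E,
                 prec1 c e' & prec1 d e'].
Proof.
move=> size_c size_d e_noninc c_e d_e h_gt0 h'_gt0 le_eE.
have e_gt0 : 0 < size e by case: c_e => le_he _ _; apply: leq_trans le_he.
set e' := set_nth 0 e 0 (nth 0 e 0 + (E - sumn e)).
have size_e' : size e' = size e by rewrite size_set_nth; apply/maxn_idPr.
exists e'; split=> //.
- exact/is_partitionP/nonincreasing_raise_head.
- by rewrite sumn_set_nth0; lia.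
- by apply: prec1_at_prec1 (prec1_at_raise_head _ h_gt0 c_e); rewrite size_e'.
- by apply: prec1_at_prec1 (prec1_at_raise_head _ h'_gt0 d_e); rewrite size_e'.
Qed.

Lemma layout_common_succ_up c d m l p p' E : layout c d m l p p' -> 0 < p -> 0 < p' ->
  \sum_(0 <= i < m) maxnth c d i <= E + maxn (nth 0 c p) (nth 0 d p') ->
  exists e, [/\ is_partition e, size e = m.-1, sumn e = E, prec1 c e & prec1 d e].
Proof.
wlog le_dc : c d p p' / nth 0 d p' <= nth 0 c p.
  move=> main H p_gt0 p'_gt0 le_E.
  case/orP: (leq_total (nth 0 d p') (nth 0 c p)) => [le_dc | le_cd].
    exact: main le_dc H p_gt0 p'_gt0 le_E.
  have le_E' : \sum_(0 <= i < m) maxnth d c i <= E + maxn (nth 0 d p') (nth 0 c p).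
    by rewrite maxnC (sum_maxnthC d c).
  by have [e [? ? ? ? ?]] := main d c p' p le_cd (layout_sym H) p'_gt0 p_gt0 le_E'; exists e.
move=> H p_gt0 p'_gt0 le_E; have [lt_pl _ _] := drop_c H; have le_lm := last_le H.
have p_range : p <= p < m by rewrite leqnn; lia.
have [e_noninc size_e sum_e c_e d_e] := common_succ_delete_spec H p_range.
set e0 := common_succ_delete c d m p in e_noninc size_e sum_e c_e d_e.
have max_p : maxnth c d p = nth 0 c p.
  exact/maxn_idPl/(layout_le_from (layout_sym H) le_dc).
have size_ce : size c = (size e0).+1 by rewrite size_e (size_c H); lia.
have size_de : size d = (size e0).+1 by rewrite size_e (size_d H); lia.
have cut_d_gt0 : 0 < maxn l.-1 p by rewrite leq_max p_gt0 orbT.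
have le_sum_E : sumn e0 <= E by rewrite (maxn_idPl le_dc) in le_E; lia.
have [e [? size_e' ? ? ?]] :=
  common_succ_up size_ce size_de e_noninc c_e d_e p_gt0 cut_d_gt0 le_sum_E.
by exists e; rewrite size_e' size_e.
Qed.

Lemma exists_common_succ_iff c d m l p p' E : layout c d m l p p' -> 0 < p -> 0 < p' ->
  (exists e, [/\ is_partition e, size e = m.-1, sumn e = E, prec1 c e & prec1 d e]) <->
  \sum_(0 <= i < m) maxnth c d i <= E + maxn (nth 0 c p) (nth 0 d p').
Proof.
move=> H p_gt0 p'_gt0; split=> [[e [_ size_e <- c_e d_e]] |]; last first.
  exact: (layout_common_succ_up H p_gt0 p'_gt0).
move: c_e d_e => /prec1P[_ [h c_e]] /prec1P[_ [h' d_e]].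
have [le_hh' | /ltnW le_h'h] := leqP h h'.
  exact: layout_common_succ_sum_ge H size_e c_e d_e le_hh'.
rewrite maxnC (sum_maxnthC c d).
exact: layout_common_succ_sum_ge (layout_sym H) size_e d_e c_e le_h'h.
Qed.

Lemma common_succ_sum_head_cut c d e m h h' :
  size c = m -> size d = m -> nonincreasing c -> nonincreasing d -> 1 < m ->
  size e = m.-1 -> prec1_at c e h -> prec1_at d e h' -> h <= h' ->
  sumn e = \sum_(1 <= i < m) maxnth c d i \/
  maxnth c d 0 + \sum_(2 <= i < m) maxnth c d i <= sumn e.
Proof.
move=> size_c size_d c_noninc d_noninc m_gt1 size_e c_e d_e le_hh'.
have [h_eq0 | h_gt0] := posnP h.
  left; rewrite sumn_nth big_add1 size_e; apply: eq_big_nat => i i_range.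
  by rewrite (common_succ_tail size_c size_d size_e c_e d_e) // h_eq0 size_e.
right; have := common_succ_sum_ge size_c size_d size_e c_e d_e le_hh' d_noninc.
rewrite big_ltn 1?[\sum_(1 <= i < m) _]big_ltn; try lia.
have := c_noninc 1 h h_gt0; have := d_noninc 1 h h_gt0; rewrite /maxnth; lia.
Qed.

Lemma common_succ_sum_head c d e m :
  size c = m -> size d = m -> nonincreasing c -> nonincreasing d -> 1 < m ->
  size e = m.-1 -> prec1 c e -> prec1 d e ->
  sumn e = \sum_(1 <= i < m) maxnth c d i \/
  maxnth c d 0 + \sum_(2 <= i < m) maxnth c d i <= sumn e.
Proof.
move=> size_c size_d c_noninc d_noninc m_gt1 size_e.
move=> /prec1P[_ [h c_e]] /prec1P[_ [h' d_e]]; have [le_hh' | /ltnW le_h'h] := leqP h h'.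
  exact: common_succ_sum_head_cut size_c size_d c_noninc d_noninc m_gt1 size_e c_e d_e le_hh'.
rewrite maxnthC !(sum_maxnthC c d).
exact: common_succ_sum_head_cut size_d size_c d_noninc c_noninc m_gt1 size_e d_e c_e le_h'h.
Qed.

Lemma layout_common_succ_head_up c d m l p p' E : layout c d m l p p' -> p = 0 -> 1 < m ->
  E = \sum_(1 <= i < m) maxnth c d i \/
  maxnth c d 0 + \sum_(2 <= i < m) maxnth c d i <= E ->
  exists e, [/\ is_partition e, size e = m.-1, sumn e = E, prec1 c e & prec1 d e].
Proof.
move=> H p_eq0 m_gt1 E_range.
have size_cm : size c = (m.-1).+1 by rewrite (size_c H); lia.
have size_dm : size d = (m.-1).+1 by rewrite (size_d H); lia.
have sum_split : \sum_(0 <= i < m) maxnth c d i =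
    maxnth c d 0 + (maxnth c d 1 + \sum_(2 <= i < m) maxnth c d i).
  by rewrite big_ltn 1?[\sum_(1 <= i < m) _]big_ltn; lia.
case: E_range => [E_eq | le_E].
  have range0 : p <= 0 < m by rewrite p_eq0; lia.
  have [e_noninc size_e sum_e c_e d_e] := common_succ_delete_spec H range0.
  exists (common_succ_delete c d m 0); split.
  - exact/is_partitionP.
  - exact: size_e.
  - by rewrite E_eq big_ltn in sum_e *; lia.
  - by apply: prec1_at_prec1 c_e; rewrite size_e.
  - by apply: prec1_at_prec1 d_e; rewrite size_e.
have range1 : p <= 1 < m by rewrite p_eq0.
have [e_noninc size_e sum_e c_e d_e] := common_succ_delete_spec H range1.
rewrite -size_e in size_cm size_dm.
have cut_d_gt0 : 0 < maxn l.-1 1 by rewrite leq_max orbT.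
have le_sum_E : sumn (common_succ_delete c d m 1) <= E by lia.
have [e [? size_e' ? ? ?]] :=
  common_succ_up size_cm size_dm e_noninc c_e d_e isT cut_d_gt0 le_sum_E.
by exists e; rewrite size_e' size_e.
Qed.

Lemma exists_common_succ_iff_head c d m l p p' E : layout c d m l p p' ->
  p = 0 \/ p' = 0 -> 1 < m ->
  (exists e, [/\ is_partition e, size e = m.-1, sumn e = E, prec1 c e & prec1 d e]) <->
  E = \sum_(1 <= i < m) maxnth c d i \/
  maxnth c d 0 + \sum_(2 <= i < m) maxnth c d i <= E.
Proof.
move=> H p_eq0 m_gt1; split=> [[e [_ size_e <- c_e d_e]] | E_range].
  exact: common_succ_sum_head (size_c H) (size_d H) (noninc_c H) (noninc_d H) m_gt1
    size_e c_e d_e.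
case: p_eq0 => [p_eq0 | p'_eq0]; first exact: layout_common_succ_head_up H p_eq0 m_gt1 E_range.
rewrite maxnthC !(sum_maxnthC c d) in E_range.
have [e [? ? ? ? ?]] := layout_common_succ_head_up (layout_sym H) p'_eq0 m_gt1 E_range.
by exists e.
Qed.

Lemma omaxnC x y : omaxn x y = omaxn y x.
Proof. by case: x => [a|]; case: y => [b|] //=; rewrite maxnC. Qed.

Lemma layout_head_max c d m l p p' : layout c d m l p p' -> p = 0 -> 1 < m ->
  maxn (nth 0 c p) (nth 0 d p') = maxnth c d 0 /\
  omaxn (xat c p.+2) (xat d p'.+2) = Some (maxnth c d 1).
Proof.
move=> H p_eq0 m_gt1; have [lt_p'l d_drop _] := drop_d H; have [_ _ c_after] := drop_c H.
have le_d1_c1 : nth 0 d 1 <= nth 0 c 1 by apply: (layout_ge_after H); rewrite p_eq0.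
have /(noninc_c H) le_c1_c0 : 0 <= 1 by [].
have /(noninc_d H) le_dp'_d0 := leq0n p'.
have /(noninc_d H) le_dp'1_d1 : 1 <= p'.+1 by [].
rewrite p_eq0 /xat /= (size_c H) (size_d H) m_gt1 /maxnth; split.
  case: d_drop => [-> // | lt_dp'_c]; have /(noninc_c H) := leq0n p'.-1.
  have [-> // | p'_gt0] := posnP p'.
  have /c_after /= le_d0_c1 : p < 1 < l by rewrite p_eq0; lia.
  lia.
by case: ifP => _ /=; congr Some; lia.
Qed.

Lemma exists_common_succ_iff_next c d m l p p' E : layout c d m l p p' ->
  p = 0 \/ p' = 0 ->
  (exists e, [/\ is_partition e, size e = m.-1, sumn e = E, prec1 c e & prec1 d e]) <->
  (E + maxn (nth 0 c p) (nth 0 d p') = \sum_(0 <= i < m) maxnth c d i \/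
   match omaxn (xat c p.+2) (xat d p'.+2) with
   | Some M2 => \sum_(0 <= i < m) maxnth c d i <= E + M2
   | None => False
   end).
Proof.
move=> H p_eq0; have l_gt0 := last_gt0 H; have le_lm := last_le H.
have [m_gt1 | m_le1] := ltnP 1 m.
  have [-> ->] : maxn (nth 0 c p) (nth 0 d p') = maxnth c d 0 /\
                 omaxn (xat c p.+2) (xat d p'.+2) = Some (maxnth c d 1).
    case: p_eq0 => [p_eq0 | p'_eq0]; first exact: layout_head_max H p_eq0 m_gt1.
    have [M_eq O_eq] := layout_head_max (layout_sym H) p'_eq0 m_gt1.
    by rewrite maxnC M_eq omaxnC O_eq !(maxnthC d c).
  rewrite (exists_common_succ_iff_head _ H p_eq0 m_gt1).
  have sum_split : \sum_(0 <= i < m) maxnth c d i =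
      maxnth c d 0 + \sum_(1 <= i < m) maxnth c d i by rewrite big_ltn //; lia.
  have sum1_split : \sum_(1 <= i < m) maxnth c d i =
      maxnth c d 1 + \sum_(2 <= i < m) maxnth c d i by rewrite big_ltn.
  rewrite sum_split sum1_split.
  by split=> -[E_eq | le_E]; [left | right | left | right]; lia.
have [lt_pl _ _] := drop_c H; have [lt_p'l _ _] := drop_d H.
have [m_eq1 p0 p'0] : [/\ m = 1, p = 0 & p' = 0] by split; lia.
rewrite p0 p'0 /xat (size_c H) (size_d H) m_eq1 big_nat1 /=.
split=> [[e [_ /size0nil -> <- _ _]] | [E_eq | []]]; first by left.
exists [::]; split=> //; first by rewrite /maxnth in E_eq; rewrite /=; lia.
  by apply/prec1P; rewrite (size_c H) m_eq1; split; last by exists 0.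
by apply/prec1P; rewrite (size_d H) m_eq1; split; last by exists 0.
Qed.

Lemma bigmax_nat_last a b (P : pred nat) F : {homo F : x y / x < y} ->
  (exists2 i, a <= i < b & P i) ->
  exists x, [/\ a <= x < b, P x, \max_(a <= i < b | P i) F i = F x
              & forall i, x < i < b -> ~~ P i].
Proof.
move=> F_mono; elim: b => [[i /andP[_ //]] | b IHb [i i_range P_i]].
have le_ab : a <= b by lia.
rewrite big_mkcond big_nat_recr //= -big_mkcond.
case P_b: (P b).
  exists b; split=> //; [lia | | by move=> j; lia].
  apply/maxn_idPr/bigmax_leqP_seq => j; rewrite mem_index_iota => /andP[_ lt_jb] _.
  exact/ltnW/F_mono.
have [|x [x_range P_x max_x x_last]] := IHb.
  exists i => //; have [eq_ib | ne_ib] := eqVneq i b; first by rewrite -eq_ib P_i in P_b.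
  by apply/andP; split; lia.
exists x; split=> // [|j j_range]; first lia.
by have [->|ne_jb] := eqVneq j b; [rewrite P_b | apply: x_last; lia].
Qed.

Lemma ell_spec c d m : size c = m -> size d = m -> c <> d ->
  [/\ 0 < ell c d, ell c d <= m, nth 0 c (ell c d).-1 != nth 0 d (ell c d).-1
    & forall i, ell c d <= i -> nth 0 c i = nth 0 d i].
Proof.
move=> size_c size_d neq_cd.
have -> : ell c d = \max_(0 <= i < m | nth 0 c i != nth 0 d i) i.+1.
  by rewrite /ell big_mkord size_c.
have [|x [/andP[_ lt_xm] neq_x -> x_last]] :=
  @bigmax_nat_last 0 m (fun i => nth 0 c i != nth 0 d i) S (fun _ _ lt_xy => lt_xy).
  have [/hasP[i] | /hasPn all_eq] := boolP (has (fun i => nth 0 c i != nth 0 d i) (iota 0 m)).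
    by rewrite mem_iota; exists i.
  case: neq_cd; apply: (eq_from_nth (x0 := 0)) => [|i]; first by rewrite size_c size_d.
  by rewrite size_c => lt_im; apply/eqP/negPn/all_eq; rewrite mem_iota.
split=> // i lt_xi.
have [lt_im | ge_im] := ltnP i m; last by rewrite !nth_default ?size_c ?size_d.
by apply/eqP/negPn/x_last; lia.
Qed.

Lemma fidx_drop_index c d : 0 < ell c d ->
  0 < fidx c d /\ drop_index c d (ell c d) (fidx c d).-1.
Proof.
move=> l_gt0; rewrite /fidx.
have [|x [/andP[x_gt0 le_xl] P_x -> x_last]] := @bigmax_nat_last 1 (ell c d).+1
    (fun i => (i == 1) || (at_ c i < at_ d i.-1)) id (fun _ _ lt_xy => lt_xy).
  by exists 1; rewrite ?eqxx.
split=> //; split; first lia.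
  by case/orP: P_x => [/eqP -> | lt_x]; [left | right].
move=> k k_range; have /x_last : x < k.+1 < (ell c d).+1 by lia.
by move=> /norP[_]; rewrite -leqNgt.
Qed.

Lemma fidx_gt0 c d m : size c = m -> size d = m -> c <> d -> 0 < fidx c d.
Proof.
move=> size_c size_d /(ell_spec size_c size_d)[l_gt0 _ _ _].
by case: (fidx_drop_index l_gt0).
Qed.

Lemma layout_fidx c d m : is_partition c -> is_partition d ->
  size c = m -> size d = m -> c <> d ->
  layout c d m (ell c d) (fidx c d).-1 (fidx d c).-1.
Proof.
move=> /is_partitionP c_noninc /is_partitionP d_noninc size_c size_d neq_cd.
have [l_gt0 le_lm neq_last eq_from_last] := ell_spec size_c size_d neq_cd.
have ell_sym : ell d c = ell c d.
  by rewrite /ell size_c size_d; apply: eq_bigl => i; rewrite eq_sym.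
have [_ drop_c] := fidx_drop_index l_gt0.
have [_ drop_d] : 0 < fidx d c /\ drop_index d c (ell c d) (fidx d c).-1.
  by rewrite -ell_sym; apply: fidx_drop_index; rewrite ell_sym.
by split.
Qed.

Unset Implicit Arguments.

Theorem lemma5p3 (m S E : nat) (c d : seq nat) :
  is_partition c -> is_partition d -> size c = m -> size d = m -> c <> d ->
  let f := fidx c d in
  let f' := fidx d c in
  let M := maxn (at_ c f) (at_ d f') in
  let smin := \sum_(1 <= i < m.+1) minn (at_ c i) (at_ d i) in
  let smax := \sum_(1 <= i < m.+1) maxn (at_ c i) (at_ d i) in
  (* part 1 *)
  ((exists g : seq nat, [/\ is_partition g, size g = m.+1, sumn g = S,
       prec1 g c & prec1 g d]) <-> S <= smin + M)
  /\
  (* part 2 *)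
  (1 < f -> 1 < f' ->
   ((exists e : seq nat, [/\ is_partition e, size e = m.-1, sumn e = E,
        prec1 c e & prec1 d e]) <-> smax <= E + M))
  /\
  (* part 3 *)
  (f = 1 \/ f' = 1 ->
   ((exists e : seq nat, [/\ is_partition e, size e = m.-1, sumn e = E,
        prec1 c e & prec1 d e]) <->
     (E + M = smax \/
      match omaxn (xat c f.+1) (xat d f'.+1) with
      | Some M2 => smax <= E + M2
      | None => False (* E >= +oo *)
      end))
   /\
   (1 < m ->
    ((exists e : seq nat, [/\ is_partition e, size e = m.-1, sumn e = E,
         prec1 c e & prec1 d e]) <->
      (E = \sum_(2 <= i < m.+1) maxn (at_ c i) (at_ d i) \/
       maxn (at_ c 1) (at_ d 1) + \sum_(3 <= i < m.+1) maxn (at_ c i) (at_ d i)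
         <= E)))).
Proof.
move=> c_part d_part size_c size_d neq_cd f f' M smin smax.
have H := layout_fidx c_part d_part size_c size_d neq_cd.
have f_gt0 : 0 < f := fidx_gt0 size_c size_d neq_cd.
have f'_gt0 : 0 < f' := fidx_gt0 size_d size_c (nesym neq_cd).
have smin_E : smin = \sum_(0 <= i < m) minnth c d i by rewrite /smin big_add1.
have smax_E : smax = \sum_(0 <= i < m) maxnth c d i by rewrite /smax big_add1.
split; first by rewrite smin_E; apply: exists_common_pred_iff H.
split.
  by move=> f_gt1 f'_gt1; rewrite smax_E; apply: exists_common_succ_iff H _ _; lia.
move=> f_eq1; have p_eq0 : f.-1 = 0 \/ f'.-1 = 0 by case: f_eq1 => ->; [left | right].
split; last by move=> m_gt1; rewrite (exists_common_succ_iff_head _ H p_eq0 m_gt1) !big_add1.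
rewrite smax_E -(prednK f_gt0) -(prednK f'_gt0).
exact: exists_common_succ_iff_next H p_eq0.
Qed.
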